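(* In the intersection type system: (1) if $\Gamma\vdash M[N/x]:\delta\mid\Delta$ and $\Gamma\vdash N:\delta'\mid\Delta$ are derivable, then $\Gamma\vdash(\lambda x.M)N:\delta\mid\Delta$ is derivable; (2) if $\Gamma\vdash\mu\alpha.(([\beta]M)[\alpha\Leftarrow N]):\delta\mid\Delta$ and $\Gamma\vdash N:\delta'\mid\Delta$ are derivable, then $\Gamma\vdash(\mu\alpha.[\beta]M)N:\delta\mid\Delta$ is derivable.
   Context: $\lambda\mu$-terms: $M,N ::= x \mid \lambda x.M \mid MN \mid \mu\alpha.C$, commands $C::=[\alpha]M$, over disjoint denumerable sets of term variables and names ($\lambda$ binds $x$, $\mu$ binds $\alpha$; bound and free variables/names assumed distinct). $M[N/x]$ is capture-avoiding substitution. Structural substitution $T[\alpha\Leftarrow L]$ ($T$ term or command): $([\alpha]M)[\alpha\Leftarrow L]=[\alpha](M[\alpha\Leftarrow L])L$; $([\beta]M)[\alpha\Leftarrow L]=[\beta](M[\alpha\Leftarrow L])$ if $\beta\neq\alpha$; $(\mu\beta.C)[\alpha\Leftarrow L]=\mu\beta.(C[\alpha\Leftarrow L])$; $x[\alpha\Leftarrow L]=x$; $(\lambda x.M)[\alpha\Leftarrow L]=\lambda x.(M[\alpha\Leftarrow L])$; $(MN)[\alpha\Leftarrow L]=(M[\alpha\Leftarrow L])(N[\alpha\Leftarrow L])$. Types: with constant $\nu$ and symbol $\omega$ (not itself a type), $\mathcal{T}_D:\ \delta ::= \nu \mid \omega\to\nu \mid \kappa\to\nu \mid \delta\wedge\delta$;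 $\mathcal{T}_C:\ \kappa ::= \delta\times\omega \mid \delta\times\kappa \mid \kappa\wedge\kappa$ ($\times$ right-associative). $\le$ is the least preorder on $\mathcal{T}_D$ and on $\mathcal{T}_C$ such that: $\sigma\wedge\tau\le\sigma$; $\sigma\wedge\tau\le\tau$; $\nu\le\omega\to\nu$; $\omega\to\nu\le\nu$; $\delta_1\times\delta_2\times\omega\le\delta_1\times\omega$; $(\delta_1\times\omega)\wedge(\delta_2\times\kappa)\le(\delta_1\wedge\delta_2)\times\kappa$; $(\delta_1\times\kappa_1)\wedge(\delta_2\times\kappa_2)\le(\delta_1\wedge\delta_2)\times(\kappa_1\wedge\kappa_2)$; $\delta_1\le\delta_2\Rightarrow\delta_1\times\omega\le\delta_2\times\omega$; $\delta_1\le\delta_2,\kappa_1\le\kappa_2\Rightarrow\delta_1\times\kappa_1\le\delta_2\times\kappa_2$; $\sigma\le\tau_1,\sigma\le\tau_2\Rightarrow\sigma\le\tau_1\wedge\tau_2$; $\kappa_2\le\kappa_1\Rightarrow\kappa_1\to\nu\le\kappa_2\to\nu$. Typing: bases $\Gamma$ (finite maps variables $\to\mathcal{T}_D$), name contexts $\Delta$ (finite maps names $\to\mathcal{T}_C$); judgements $\Gamma\vdash M:\delta\mid\Delta$, with variables of $\Gamma$ and names of $\Delta$ not bound in $M$. Rules: (ax) $\Gamma,x{:}\delta\vdash x:\delta\mid\Delta$; (abs) from $\Gamma,x{:}\delta\vdash M:\kappa\to\nu\mid\Delta$ infer $\Gamma\vdash\lambda x.M:\delta\times\kappa\to\nu\mid\Delta$;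 (app) from $\Gamma\vdash M:\delta\times\kappa\to\nu\mid\Delta$ and $\Gamma\vdash N:\delta\mid\Delta$ infer $\Gamma\vdash MN:\kappa\to\nu\mid\Delta$ ($\kappa\in\mathcal{T}_C$ or $\kappa=\omega$); ($\mu$) from $\Gamma\vdash M:\kappa'\to\nu\mid\alpha{:}\kappa,\beta{:}\kappa',\Delta$ infer $\Gamma\vdash\mu\alpha.[\beta]M:\kappa\to\nu\mid\beta{:}\kappa',\Delta$ ($\beta\neq\alpha$), and from $\Gamma\vdash M:\kappa\to\nu\mid\alpha{:}\kappa,\Delta$ infer $\Gamma\vdash\mu\alpha.[\alpha]M:\kappa\to\nu\mid\Delta$; ($\le$) from $\Gamma\vdash M:\delta\mid\Delta$, $\delta\le\delta'$ infer $\Gamma\vdash M:\delta'\mid\Delta$; ($\wedge$) from $\Gamma\vdash M:\delta\mid\Delta$, $\Gamma\vdash M:\delta'\mid\Delta$ infer $\Gamma\vdash M:\delta\wedge\delta'\mid\Delta$. *)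

From Stdlib Require Import List Arith.
Import ListNotations.

(* ---------- Syntax ----------
   Two disjoint sorts of de Bruijn indices: term variables and names.
   Lam binds term variable 0, Mu binds name 0. *)
Inductive term : Type :=
| Var : nat -> term
| Lam : term -> term
| App : term -> term -> term
| Mu  : cmd -> term
with cmd : Type :=
| Named : nat -> term -> cmd.

Definition up_ren (r : nat -> nat) : nat -> nat :=
  fun n => match n with 0 => 0 | S k => S (r k) end.

Fixpoint ren_var (r : nat -> nat) (M : term) : term :=
  match M with
  | Var n => Var (r n)
  | Lam M => Lam (ren_var (up_ren r) M)
  | App M N => App (ren_var r M) (ren_var r N)
  | Mu c => Mu (ren_var_c r c)
  end
with ren_var_c (r : nat -> nat) (c : cmd) : cmd :=
  match c with Named a M => Named a (ren_var r M) end.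

Fixpoint ren_name (r : nat -> nat) (M : term) : term :=
  match M with
  | Var n => Var n
  | Lam M => Lam (ren_name r M)
  | App M N => App (ren_name r M) (ren_name r N)
  | Mu c => Mu (ren_name_c (up_ren r) c)
  end
with ren_name_c (r : nat -> nat) (c : cmd) : cmd :=
  match c with Named a M => Named (r a) (ren_name r M) end.

Definition up_sub (s : nat -> term) : nat -> term :=
  fun n => match n with 0 => Var 0 | S k => ren_var S (s k) end.

Fixpoint subst (s : nat -> term) (M : term) : term :=
  match M with
  | Var n => s n
  | Lam M => Lam (subst (up_sub s) M)
  | App M N => App (subst s M) (subst s N)
  | Mu c => Mu (subst_c (fun n => ren_name S (s n)) c)
  end
with subst_c (s : nat -> term) (c : cmd) : cmd :=
  match c with Named a M => Named a (subst s M) end.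

(* M[N/x] where x is the variable bound by the enclosing lambda (index 0) *)
Definition subst0 (M N : term) : term :=
  subst (fun n => match n with 0 => N | S k => Var k end) M.

(* structural substitution T[a <= L] *)
Fixpoint ssub (a : nat) (L : term) (M : term) : term :=
  match M with
  | Var n => Var n
  | Lam M => Lam (ssub a (ren_var S L) M)
  | App M1 M2 => App (ssub a L M1) (ssub a L M2)
  | Mu c => Mu (ssub_c (S a) (ren_name S L) c)
  end
with ssub_c (a : nat) (L : term) (c : cmd) : cmd :=
  match c with
  | Named b M =>
      if Nat.eqb b a then Named b (App (ssub a L M) L)
      else Named b (ssub a L M)
  end.

Inductive tyD : Type :=
| Nu : tyD
| OmArr : tyD                   (* omega -> nu *)
| KArr : tyC -> tyD             (* kappa -> nu *)
| AndD : tyD -> tyD -> tyD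
with tyC : Type :=
| ProdOm : tyD -> tyC           (* delta x omega *)
| Prod : tyD -> tyC -> tyC
| AndC : tyC -> tyC -> tyC.

(* "kappa in T_C or kappa = omega": None stands for omega *)
Definition arr (k : option tyC) : tyD :=
  match k with None => OmArr | Some k => KArr k end.
Definition prod (d : tyD) (k : option tyC) : tyC :=
  match k with None => ProdOm d | Some k => Prod d k end.

Inductive leD : tyD -> tyD -> Prop :=
| leD_refl d : leD d d
| leD_trans d1 d2 d3 : leD d1 d2 -> leD d2 d3 -> leD d1 d3
| leD_andl d1 d2 : leD (AndD d1 d2) d1
| leD_andr d1 d2 : leD (AndD d1 d2) d2
| leD_nu_om : leD Nu OmArr
| leD_om_nu : leD OmArr Nu
| leD_and d t1 t2 : leD d t1 -> leD d t2 -> leD d (AndD t1 t2)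
| leD_arr k1 k2 : leC k2 k1 -> leD (KArr k1) (KArr k2)
with leC : tyC -> tyC -> Prop :=
| leC_refl k : leC k k
| leC_trans k1 k2 k3 : leC k1 k2 -> leC k2 k3 -> leC k1 k3
| leC_andl k1 k2 : leC (AndC k1 k2) k1
| leC_andr k1 k2 : leC (AndC k1 k2) k2
| leC_drop d1 d2 : leC (Prod d1 (ProdOm d2)) (ProdOm d1)
| leC_and_om d1 d2 k :
    leC (AndC (ProdOm d1) (Prod d2 k)) (Prod (AndD d1 d2) k)
| leC_and_prod d1 d2 k1 k2 :
    leC (AndC (Prod d1 k1) (Prod d2 k2)) (Prod (AndD d1 d2) (AndC k1 k2))
| leC_prodom d1 d2 : leD d1 d2 -> leC (ProdOm d1) (ProdOm d2)
| leC_prod d1 d2 k1 k2 : leD d1 d2 -> leC k1 k2 -> leC (Prod d1 k1) (Prod d2 k2)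
| leC_and k t1 t2 : leC k t1 -> leC k t2 -> leC k (AndC t1 t2).

Definition ctxG := list (option tyD).
Definition ctxD := list (option tyC).

Inductive typ : ctxG -> term -> tyD -> ctxD -> Prop :=
| t_ax G D x d :
    nth x G None = Some d -> typ G (Var x) d D
| t_abs G D M d k :
    typ (Some d :: G) M (arr k) D -> typ G (Lam M) (KArr (prod d k)) D
| t_app G D M N d k :
    typ G M (KArr (prod d k)) D -> typ G N d D -> typ G (App M N) (arr k) D
| t_mu G D M k k' b :
    nth b D None = Some k' ->
    typ G M (KArr k') (Some k :: D) ->
    typ G (Mu (Named (S b) M)) (KArr k) D
| t_mu_self G D M k :
    typ G M (KArr k) (Some k :: D) ->
    typ G (Mu (Named 0 M)) (KArr k) D
| t_le G D M d d' :
    typ G M d D -> leD d d' -> typ G M d' D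
| t_and G D M d d' :
    typ G M d D -> typ G M d' D -> typ G M (AndD d d') D.

(** For a beta-redex, the derivation of [M[N/x]] uses [N]
    at finitely many types; their intersection (or the given type of [N] when
    [x] does not occur) is the type assumed for [x]; since every [delta] is
    equivalent to an intersection of arrows [kappa -> nu] or [omega -> nu],
    [lambda x.M] can be typed at [delta_x * kappa -> nu] for each of them.
    For a mu-redex, every occurrence [[alpha](P N)] created by the structural
    substitution is typed through an arrow [d_i * kappa -> nu] with [N : d_i];
    giving [alpha] the type [(/\ d_i) * kappa] types [mu alpha.[beta]M] at
    [(/\ d_i) * kappa -> nu], which is then applied to [N]. *)

From Stdlib Require Import List Arith.
Import ListNotations.

Lemma nth_tl {A : Type} (L : list (option A)) x :
  nth x (tl L) None = nth (S x) L None.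
Proof. destruct L, x; reflexivity. Qed.

Fixpoint upd {A : Type} (a : nat) (x : option A) (L : list (option A)) :
    list (option A) :=
  match a with
  | 0 => x :: tl L
  | S a => hd None L :: upd a x (tl L)
  end.

Lemma nth_upd {A : Type} a x (L : list (option A)) b :
  nth b (upd a x L) None = if Nat.eqb b a then x else nth b L None.
Proof.
  revert a L; induction b as [|b IH]; intros [|a] [|y L]; simpl; try reflexivity.
  - destruct b; reflexivity.
  - rewrite IH; simpl. destruct (Nat.eqb b a); [reflexivity | destruct b; reflexivity].
  - rewrite IH; reflexivity.
Qed.

Lemma nth_upd_eq {A : Type} a x (L : list (option A)) : nth a (upd a x L) None = x.
Proof. rewrite nth_upd, Nat.eqb_refl; reflexivity. Qed.

Fixpoint arrow_comp (k : tyC) (d : tyD) : Prop :=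
  match d with
  | KArr k0 => k = k0
  | AndD d1 d2 => arrow_comp k d1 \/ arrow_comp k d2
  | _ => False
  end.

Lemma leD_arrow_comp d d' :
  leD d d' -> forall k, arrow_comp k d' -> exists q, arrow_comp q d /\ leC k q.
Proof.
  induction 1; intros k Hk; simpl in *.
  - exists k; split; [assumption | apply leC_refl].
  - destruct (IHleD2 _ Hk) as [q [Hq Hkq]].
    destruct (IHleD1 _ Hq) as [q' [Hq' Hqq']].
    exists q'; split; [assumption | eapply leC_trans; eassumption].
  - exists k; split; [now left | apply leC_refl].
  - exists k; split; [now right | apply leC_refl].
  - contradiction.
  - contradiction.
  - destruct Hk; auto.
  - subst; exists k1; split; auto.
Qed.

Lemma typ_App_inv G D P Q e :
  typ G (App P Q) e D -> forall k, arrow_comp k e ->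
  exists d, typ G P (KArr (Prod d k)) D /\ typ G Q d D.
Proof.
  intro H; remember (App P Q) as PQ eqn:EPQ; revert P Q EPQ.
  induction H; intros P0 Q0 EPQ k0 Hk; try discriminate.
  - injection EPQ as -> ->.
    destruct k as [k|]; simpl in Hk; [subst | contradiction].
    exists d; auto.
  - destruct (leD_arrow_comp _ _ H0 _ Hk) as [q [Hq Hle]].
    destruct (IHtyp _ _ EPQ _ Hq) as [d1 [HP HQ]].
    exists d1; split; [| assumption].
    eapply t_le; [exact HP |].
    apply leD_arr, leC_prod; [apply leD_refl | assumption].
  - destruct Hk; eauto.
Qed.

Lemma typ_Var_inv G D x e :
  typ G (Var x) e D -> exists e0, nth x G None = Some e0 /\ leD e0 e.
Proof.
  intro H; remember (Var x) as X eqn:EX; revert EX.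
  induction H; intro EX; try discriminate.
  - injection EX as ->. exists d; split; [assumption | apply leD_refl].
  - destruct (IHtyp EX) as [e0 [He0 Hle]].
    exists e0; split; [assumption | eapply leD_trans; eassumption].
  - destruct (IHtyp1 EX) as [e0 [He0 Hle0]], (IHtyp2 EX) as [e1 [He1 Hle1]].
    rewrite He0 in He1; injection He1 as <-.
    exists e0; split; [assumption | apply leD_and; assumption].
Qed.

Lemma typ_ren_var G P d D :
  typ G P d D -> forall r G',
  (forall x e, nth x G None = Some e -> nth (r x) G' None = Some e) ->
  typ G' (ren_var r P) d D.
Proof.
  induction 1; intros r G' HG; simpl.
  - constructor; auto.
  - constructor; apply IHtyp; intros [|x] e He; simpl in *; auto.
  - econstructor; eauto.
  - econstructor; eauto.
  - econstructor; eauto.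
  - eapply t_le; eauto.
  - apply t_and; eauto.
Qed.

Lemma typ_ren_var_inv G' P' d D :
  typ G' P' d D -> forall r P G, P' = ren_var r P ->
  (forall x e, nth (r x) G' None = Some e -> nth x G None = Some e) ->
  typ G P d D.
Proof.
  induction 1; intros r P0 G0 EP HG;
    try (destruct P0 as [y|P1|P1 P2|[a P1]]; simpl in EP; try discriminate;
         injection EP; intros; subst).
  - constructor; auto.
  - constructor; eapply IHtyp; [reflexivity |].
    intros [|x] e He; simpl in *; auto.
  - eapply t_app; eauto.
  - eapply t_mu; eauto.
  - eapply t_mu_self; eauto.
  - eapply t_le; eauto.
  - apply t_and; eauto.
Qed.

Lemma typ_ren_var_S G o L d D : typ (o :: G) (ren_var S L) d D <-> typ G L d D.
Proof.
  split; intro H.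
  - eapply typ_ren_var_inv; [exact H | reflexivity | auto].
  - eapply typ_ren_var; [exact H | auto].
Qed.

Lemma typ_ren_name G P d D :
  typ G P d D -> forall r D',
  (forall a k, nth a D None = Some k -> nth (r a) D' None = Some k) ->
  typ G (ren_name r P) d D'.
Proof.
  induction 1; intros r D' HD; simpl.
  - constructor; auto.
  - constructor; auto.
  - econstructor; eauto.
  - eapply t_mu; eauto. apply IHtyp; intros [|x] e He; simpl in *; auto.
  - eapply t_mu_self. apply IHtyp; intros [|x] e He; simpl in *; auto.
  - eapply t_le; eauto.
  - apply t_and; eauto.
Qed.

Lemma typ_ren_name_inv G P' d D' :
  typ G P' d D' -> forall r P D, P' = ren_name r P ->
  (forall a k, nth (r a) D' None = Some k -> nth a D None = Some k) ->
  typ G P d D.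
Proof.
  induction 1; intros r P0 D0 EP HD;
    try (destruct P0 as [y|P1|P1 P2|[[|a] P1]]; simpl in EP; try discriminate;
         injection EP; intros; subst).
  - constructor; auto.
  - constructor; eauto.
  - econstructor; eauto.
  - eapply t_mu; eauto.
    eapply IHtyp; [reflexivity |]. intros [|x] e He; simpl in *; auto.
  - eapply t_mu_self.
    eapply IHtyp; [reflexivity |]. intros [|x] e He; simpl in *; auto.
  - eapply t_le; eauto.
  - apply t_and; eauto.
Qed.

Lemma typ_ren_name_S G o L d D : typ G (ren_name S L) d (o :: D) <-> typ G L d D.
Proof.
  split; intro H.
  - eapply typ_ren_name_inv; [exact H | reflexivity | auto].
  - eapply typ_ren_name; [exact H | auto].
Qed.

Definition ctxG_le (G' G : ctxG) : Prop :=
  forall x e, nth x G None = Some e -> exists e', nth x G' None = Some e' /\ leD e' e.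

Definition ctxD_le (D' D : ctxD) : Prop :=
  forall a k, nth a D None = Some k -> exists k', nth a D' None = Some k' /\ leC k' k.

Lemma ctxG_le_cons G' G d : ctxG_le G' G -> ctxG_le (Some d :: G') (Some d :: G).
Proof.
  intros HG [|x] e He; simpl in *; auto.
  injection He as <-. exists d; split; [reflexivity | apply leD_refl].
Qed.

Lemma ctxD_le_cons D' D k : ctxD_le D' D -> ctxD_le (Some k :: D') (Some k :: D).
Proof.
  intros HD [|a] k0 Hk; simpl in *; auto.
  injection Hk as <-. exists k; split; [reflexivity | apply leC_refl].
Qed.

Lemma typ_ctxG_le G M d D : typ G M d D -> forall G', ctxG_le G' G -> typ G' M d D.
Proof.
  induction 1; intros G' HG.
  - destruct (HG _ _ H) as [e' [He' Hle]]. eapply t_le; [constructor; eauto | auto].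
  - constructor; apply IHtyp, ctxG_le_cons, HG.
  - eapply t_app; eauto.
  - eapply t_mu; eauto.
  - eapply t_mu_self; eauto.
  - eapply t_le; eauto.
  - apply t_and; eauto.
Qed.

Lemma typ_ctxD_le G M d D : typ G M d D -> forall D', ctxD_le D' D -> typ G M d D'.
Proof.
  induction 1; intros D' HD.
  - constructor; auto.
  - constructor; auto.
  - econstructor; eauto.
  - destruct (HD _ _ H) as [k2 [Hk2 Hle]].
    eapply t_mu; [exact Hk2 |].
    eapply t_le; [apply IHtyp, ctxD_le_cons, HD | apply leD_arr, Hle].
  - eapply t_mu_self; apply IHtyp, ctxD_le_cons, HD.
  - eapply t_le; eauto.
  - apply t_and; eauto.
Qed.

Lemma typ_upd_leC G M e a k1 k2 D :
  leC k1 k2 -> typ G M e (upd a (Some k2) D) -> typ G M e (upd a (Some k1) D).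
Proof.
  intros Hle H; eapply typ_ctxD_le; [exact H |].
  intros b k Hb; rewrite nth_upd in *; destruct (Nat.eqb b a).
  - injection Hb as <-; eauto.
  - exists k; split; [assumption | apply leC_refl].
Qed.

Lemma typ_upd_Prod_andl G M e a d1 d2 k D :
  typ G M e (upd a (Some (Prod d1 k)) D) ->
  typ G M e (upd a (Some (Prod (AndD d1 d2) k)) D).
Proof. apply typ_upd_leC, leC_prod; [apply leD_andl | apply leC_refl]. Qed.

Lemma typ_upd_Prod_andr G M e a d1 d2 k D :
  typ G M e (upd a (Some (Prod d2 k)) D) ->
  typ G M e (upd a (Some (Prod (AndD d1 d2) k)) D).
Proof. apply typ_upd_leC, leC_prod; [apply leD_andr | apply leC_refl]. Qed.

Definition mergeO (o1 o2 : option tyD) : option tyD :=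
  match o1, o2 with
  | Some a, Some b => Some (AndD a b)
  | Some a, None => Some a
  | None, o => o
  end.

Fixpoint mergeG (G1 G2 : ctxG) : ctxG :=
  match G1, G2 with
  | [], _ => G2
  | _, [] => G1
  | o1 :: G1', o2 :: G2' => mergeO o1 o2 :: mergeG G1' G2'
  end.

Lemma nth_mergeG G1 G2 x :
  nth x (mergeG G1 G2) None = mergeO (nth x G1 None) (nth x G2 None).
Proof.
  revert G2 x; induction G1 as [|o G1 IH]; intros [|o2 G2] [|x]; simpl; auto.
  - destruct o; reflexivity.
  - destruct (nth x G1 None); [| destruct x]; reflexivity.
Qed.

Lemma ctxG_le_mergeG_l G1 G2 : ctxG_le (mergeG G1 G2) G1.
Proof.
  intros x e He; rewrite nth_mergeG, He.
  destruct (nth x G2 None); eexists; split; try reflexivity; [apply leD_andl | apply leD_refl].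
Qed.

Lemma ctxG_le_mergeG_r G1 G2 : ctxG_le (mergeG G1 G2) G2.
Proof.
  intros x e He; rewrite nth_mergeG, He.
  destruct (nth x G1 None); eexists; split; try reflexivity; [apply leD_andr | apply leD_refl].
Qed.

(** * Expansion of a substitution *)

Definition subst_typed (s : nat -> term) (G' G : ctxG) (D : ctxD) : Prop :=
  forall x e, nth x G' None = Some e -> typ G (s x) e D.

Lemma subst_typed_mergeG s G1 G2 G D :
  subst_typed s G1 G D -> subst_typed s G2 G D -> subst_typed s (mergeG G1 G2) G D.
Proof.
  intros H1 H2 x e He; rewrite nth_mergeG in He.
  destruct (nth x G1 None) eqn:E1, (nth x G2 None) eqn:E2; simpl in He;
    try discriminate; injection He as <-; auto using t_and.
Qed.

Lemma subst_inv_Var s G D y d :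
  typ G (s y) d D -> exists G', typ G' (Var y) d D /\ subst_typed s G' G D.
Proof.
  intro H; exists (upd y (Some d) []); split.
  - constructor; apply nth_upd_eq.
  - intros x e He; rewrite nth_upd in He.
    destruct (Nat.eqb_spec x y) as [-> | _].
    + injection He as <-; exact H.
    + destruct x; discriminate.
Qed.

(* [up_sub s] maps [Var 0] to itself, so the type [G'] gives to [0] is above [d]. *)
Lemma subst_typed_up_sub_head s G' G D d :
  subst_typed (up_sub s) G' (Some d :: G) D -> ctxG_le (Some d :: tl G') G'.
Proof.
  intros HG [|x] e He; simpl.
  - destruct (typ_Var_inv _ _ _ _ (HG 0 e He)) as [e0 [He0 Hle]].
    injection He0 as <-; eauto.
  - rewrite nth_tl; exists e; split; [assumption | apply leD_refl].
Qed.

Lemma subst_typed_up_sub_tail s G' G D d :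
  subst_typed (up_sub s) G' (Some d :: G) D -> subst_typed s (tl G') G D.
Proof.
  intros HG x e He; rewrite nth_tl in He.
  apply (typ_ren_var_S G (Some d)), (HG (S x) e He).
Qed.

Lemma subst_typed_ren_name_S s G' G D k :
  subst_typed (fun n => ren_name S (s n)) G' G (Some k :: D) -> subst_typed s G' G D.
Proof. intros HG x e He; apply (typ_ren_name_S G (Some k)), HG, He. Qed.

Lemma typ_subst_inv G P d D :
  typ G P d D -> forall M s, P = subst s M ->
  exists G', typ G' M d D /\ subst_typed s G' G D.
Proof.
  induction 1; intros M0 s EP.
  1-5: destruct M0 as [y|M1|M1 M2|[a M1]]; simpl in EP; try discriminate;
    try (apply subst_inv_Var; rewrite <- EP; econstructor; eassumption).
  - injection EP as EP.
    destruct (IHtyp _ _ EP) as [G' [HM HG]].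
    exists (tl G'); split.
    + apply t_abs; eapply typ_ctxG_le;
        [exact HM | eapply subst_typed_up_sub_head; exact HG].
    + eapply subst_typed_up_sub_tail; exact HG.
  - injection EP as EP1 EP2.
    destruct (IHtyp1 _ _ EP1) as [G1 [HM1 HG1]], (IHtyp2 _ _ EP2) as [G2 [HM2 HG2]].
    exists (mergeG G1 G2); split.
    + eapply t_app; eapply typ_ctxG_le;
        eauto using ctxG_le_mergeG_l, ctxG_le_mergeG_r.
    + apply subst_typed_mergeG; assumption.
  - injection EP as <- EP.
    destruct (IHtyp _ _ EP) as [G' [HM HG]].
    exists G'; split; [eapply t_mu; eauto | eapply subst_typed_ren_name_S; exact HG].
  - injection EP as <- EP.
    destruct (IHtyp _ _ EP) as [G' [HM HG]].
    exists G'; split; [eapply t_mu_self; eauto | eapply subst_typed_ren_name_S; exact HG].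
  - destruct (IHtyp _ _ EP) as [G' [HM HG]].
    exists G'; split; [eapply t_le; eauto | assumption].
  - destruct (IHtyp1 _ _ EP) as [G1 [HM1 HG1]], (IHtyp2 _ _ EP) as [G2 [HM2 HG2]].
    exists (mergeG G1 G2); split.
    + apply t_and; eapply typ_ctxG_le; eauto using ctxG_le_mergeG_l, ctxG_le_mergeG_r.
    + apply subst_typed_mergeG; assumption.
Qed.

Lemma typ_App_Lam d G D M N d0 :
  typ (Some d0 :: G) M d D -> typ G N d0 D -> typ G (App (Lam M) N) d D.
Proof.
  revert G D M N d0; induction d as [| | k | d1 IH1 d2 IH2];
    intros G D M N d0 HM HN.
  - apply t_le with (d := OmArr); [| apply leD_om_nu].
    apply (t_app _ _ _ _ d0 None); [| exact HN].
    apply t_abs; eapply t_le; [exact HM | apply leD_nu_om].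
  - apply (t_app _ _ _ _ d0 None); [apply t_abs, HM | exact HN].
  - apply (t_app _ _ _ _ d0 (Some k)); [apply t_abs, HM | exact HN].
  - apply t_and.
    + eapply IH1; [eapply t_le; [exact HM | apply leD_andl] | exact HN].
    + eapply IH2; [eapply t_le; [exact HM | apply leD_andr] | exact HN].
Qed.

Lemma subject_expansion_beta G D M N d d' :
  typ G (subst0 M N) d D -> typ G N d' D -> typ G (App (Lam M) N) d D.
Proof.
  intros H HN.
  destruct (typ_subst_inv _ _ _ _ H _ _ eq_refl) as [G' [HM HG]].
  (* if [x] does not occur, any type of [N] can be assumed for it *)
  set (d0 := match nth 0 G' None with Some e => e | None => d' end).
  apply (typ_App_Lam _ _ _ _ _ d0).
  - eapply typ_ctxG_le; [exact HM |].
    intros [|x] e He; simpl.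
    + unfold d0; rewrite He; exists e; split; [reflexivity | apply leD_refl].
    + exact (typ_Var_inv _ _ _ _ (HG (S x) e He)).
  - unfold d0; destruct (nth 0 G' None) eqn:E; [exact (HG 0 t E) | exact HN].
Qed.

(** * Expansion of a structural substitution *)

Fixpoint term_ind_named (P : term -> Prop)
  (HV : forall n, P (Var n)) (HL : forall M, P M -> P (Lam M))
  (HA : forall M N, P M -> P N -> P (App M N))
  (HM : forall b M, P M -> P (Mu (Named b M))) (M : term) {struct M} : P M :=
  match M with
  | Var n => HV n
  | Lam M0 => HL M0 (term_ind_named P HV HL HA HM M0)
  | App M1 M2 => HA M1 M2 (term_ind_named P HV HL HA HM M1) (term_ind_named P HV HL HA HM M2)
  | Mu (Named b M0) => HM b M0 (term_ind_named P HV HL HA HM M0)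
  end.

(* [M : e] when the name [a : k] is replaced by [a : d * k] with [L : d]. *)
Definition typ_under_arg G D a L k M e : Prop :=
  exists d, typ G L d D /\ typ G M e (upd a (Some (Prod d k)) D).

Lemma typ_under_arg_le G D a L k M e e' :
  typ_under_arg G D a L k M e -> leD e e' -> typ_under_arg G D a L k M e'.
Proof. intros [d [HL HM]] Hle; exists d; split; [| eapply t_le]; eassumption. Qed.

Lemma typ_under_arg_and G D a L k M e1 e2 :
  typ_under_arg G D a L k M e1 -> typ_under_arg G D a L k M e2 ->
  typ_under_arg G D a L k M (AndD e1 e2).
Proof.
  intros [d1 [HL1 HM1]] [d2 [HL2 HM2]]; exists (AndD d1 d2); split.
  - apply t_and; assumption.
  - apply t_and; [apply typ_upd_Prod_andl | apply typ_upd_Prod_andr]; assumption.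
Qed.

Lemma typ_under_arg_Lam G D a L k M d k' :
  typ_under_arg (Some d :: G) D a (ren_var S L) k M (arr k') ->
  typ_under_arg G D a L k (Lam M) (KArr (prod d k')).
Proof.
  intros [d1 [HL HM]]; exists d1; split.
  - eapply typ_ren_var_S; exact HL.
  - apply t_abs, HM.
Qed.

Lemma typ_under_arg_App G D a L k M1 M2 d k' :
  typ_under_arg G D a L k M1 (KArr (prod d k')) -> typ_under_arg G D a L k M2 d ->
  typ_under_arg G D a L k (App M1 M2) (arr k').
Proof.
  intros [d1 [HL1 HM1]] [d2 [HL2 HM2]]; exists (AndD d1 d2); split.
  - apply t_and; assumption.
  - eapply t_app; [apply typ_upd_Prod_andl | apply typ_upd_Prod_andr]; eassumption.
Qed.

Lemma typ_under_arg_Mu G D a L k b M k0 k' :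
  nth b D None = Some k' -> b <> a ->
  typ_under_arg G (Some k0 :: D) (S a) (ren_name S L) k M (KArr k') ->
  typ_under_arg G D a L k (Mu (Named (S b) M)) (KArr k0).
Proof.
  intros Hb Hba [d [HL HM]]; exists d; split.
  - eapply typ_ren_name_S; exact HL.
  - eapply t_mu; [| exact HM].
    rewrite nth_upd; apply Nat.eqb_neq in Hba; rewrite Hba; exact Hb.
Qed.

Lemma typ_under_arg_Mu_self G D a L k M k0 :
  typ_under_arg G (Some k0 :: D) (S a) (ren_name S L) k M (KArr k0) ->
  typ_under_arg G D a L k (Mu (Named 0 M)) (KArr k0).
Proof.
  intros [d [HL HM]]; exists d; split.
  - eapply typ_ren_name_S; exact HL.
  - apply t_mu_self, HM.
Qed.

(* The name [a] itself: [[a](M' L)] forces [M'] to be used at [dl * k -> nu]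
   with [L : dl], and the whole command is typed at [(dl /\ d) * k]. *)
Lemma typ_under_arg_Mu_arg G D a L k M dl k0 :
  nth a D None = Some k ->
  typ G (ren_name S L) dl (Some k0 :: D) ->
  typ_under_arg G (Some k0 :: D) (S a) (ren_name S L) k M (KArr (Prod dl k)) ->
  typ_under_arg G D a L k (Mu (Named (S a) M)) (KArr k0).
Proof.
  intros Ha HLl [d [HL HM]]; exists (AndD dl d); split.
  - apply t_and; eapply typ_ren_name_S; eassumption.
  - eapply t_mu; [apply nth_upd_eq |].
    change (Some k0 :: upd a (Some (Prod (AndD dl d) k)) D)
      with (upd (S a) (Some (Prod (AndD dl d) k)) (Some k0 :: D)).
    eapply t_le; [apply typ_upd_Prod_andr, HM |].
    apply leD_arr, leC_prod; [apply leD_andl | apply leC_refl].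
Qed.

Lemma typ_ssub_inv M : forall G D e a L k d0,
  typ G (ssub a L M) e D -> nth a D None = Some k -> typ G L d0 D ->
  typ_under_arg G D a L k M e.
Proof.
  induction M as [n | M0 IH | M1 M2 IH1 IH2 | b M0 IH] using term_ind_named;
    intros G D e a L k d0 H Ha HL; remember (ssub a L _) as P eqn:EP;
    revert Ha HL EP; induction H; intros Ha HL EP; try discriminate;
    eauto using typ_under_arg_le, typ_under_arg_and.
  - injection EP as <-; exists d0; split; [exact HL | apply t_ax; exact H].
  - injection EP as EP; subst.
    apply typ_under_arg_Lam; eapply IH; [exact H | exact Ha |].
    apply typ_ren_var_S; exact HL.
  - injection EP as -> ->.
    eapply typ_under_arg_App; [eapply IH1 | eapply IH2]; eassumption.
  - simpl in EP; destruct (Nat.eqb_spec b (S a)) as [-> | Hne];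
      injection EP as <- EP; subst M.
    + rewrite Ha in H; injection H as <-.
      destruct (typ_App_inv _ _ _ _ _ H0 k eq_refl) as [dl [HM HLl]].
      eapply typ_under_arg_Mu_arg; [exact Ha | exact HLl |].
      eapply IH; [exact HM | exact Ha | exact HLl].
    + eapply typ_under_arg_Mu; [exact H | congruence |].
      eapply IH; [exact H0 | exact Ha |]. apply typ_ren_name_S; exact HL.
  - simpl in EP; destruct (Nat.eqb_spec b (S a)) as [-> | _]; [discriminate |].
    injection EP as <- EP; subst M.
    apply typ_under_arg_Mu_self; eapply IH; [exact H | exact Ha |].
    apply typ_ren_name_S; exact HL.
Qed.

Lemma subject_expansion_mu G D b M N d d' :
  typ G (Mu (ssub_c 0 (ren_name S N) (Named b M))) d D -> typ G N d' D ->
  typ G (App (Mu (Named b M)) N) d D.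
Proof.
  intros H HN; remember (Mu (ssub_c 0 (ren_name S N) (Named b M))) as P eqn:EP.
  revert HN EP; induction H; intros HN EP; try discriminate.
  - destruct b as [|b1]; simpl in EP; [discriminate |]; injection EP as -> ->.
    destruct (typ_ssub_inv _ _ _ _ 0 (ren_name S N) k d' H0 eq_refl
                (proj2 (typ_ren_name_S _ _ _ _ _) HN)) as [d1 [HL HM]].
    apply (t_app _ _ _ _ d1 (Some k)).
    + eapply t_mu; eassumption.
    + eapply typ_ren_name_S; exact HL.
  - destruct b as [|b1]; simpl in EP; [| discriminate]; injection EP as ->.
    destruct (typ_App_inv _ _ _ _ _ H k eq_refl) as [dl [HM HLl]].
    destruct (typ_ssub_inv _ _ _ _ 0 (ren_name S N) k dl HM eq_refl HLl)
      as [d1 [HL HM1]].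
    apply (t_app _ _ _ _ (AndD dl d1) (Some k)).
    + apply t_mu_self.
      change (Some (prod (AndD dl d1) (Some k)) :: D)
        with (upd 0 (Some (Prod (AndD dl d1) k)) (Some k :: D)).
      eapply t_le; [apply typ_upd_Prod_andr, HM1 |].
      apply leD_arr, leC_prod; [apply leD_andl | apply leC_refl].
    + apply t_and; eapply typ_ren_name_S; eassumption.
  - eapply t_le; eauto.
  - apply t_and; eauto.
Qed.

Theorem mainTheorem13 :
  (forall (G : ctxG) (D : ctxD) (M N : term) (d d' : tyD),
      typ G (subst0 M N) d D -> typ G N d' D ->
      typ G (App (Lam M) N) d D)
  /\
  (forall (G : ctxG) (D : ctxD) (b : nat) (M N : term) (d d' : tyD),
      typ G (Mu (ssub_c 0 (ren_name S N) (Named b M))) d D -> typ G N d' D ->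
      typ G (App (Mu (Named b M)) N) d D).
Proof.
  split; [exact subject_expansion_beta | exact subject_expansion_mu].
Qed.
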